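(* Let $M,N,S\ge1$ be integers. Suppose that for every $m\in[M]$, $\{X_{m,n}\}_{n\in[N]}$ are independent Bernoulli random variables, with $\sum_{m\in[M]}\mathbb E[X_{m,n}]=1$ for every $n\in[N]$, and let $\{C_{m,n}\}_{m\in[M],n\in[N]}\subset\mathbb R^S$ be constant vectors with $|C_{m,n}|_1\le C$ for all $m,n$. Then $$\sum_{s=1}^S\sum_{m=1}^M\mathbb E\Big|\sum_{n=1}^NC_{m,n}(s)\big(X_{m,n}-\mathbb E[X_{m,n}]\big)\Big|\le C\sqrt{MNS}.$$
   Context: $[M]=\{1,\dots,M\}$; $C_{m,n}(s)$ is the $s$-th coordinate of $C_{m,n}$; $|\cdot|_1$ is the $L_1$ norm. *)

From HB Require Import structures.
From mathcomp Require Import all_boot all_order all_algebra.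
From mathcomp Require Import all_classical all_reals all_analysis.
Set Implicit Arguments. Unset Strict Implicit. Unset Printing Implicit Defensive.
Import Order.TTheory GRing.Theory Num.Theory.
Local Open Scope classical_set_scope.
Local Open Scope ring_scope.

Definition bernoulli_rv d (T : measurableType d) (R : realType)
  (P : probability T R) (X : {RV P >-> R}) : Prop :=
  P [set t | X t = 0 \/ X t = 1] = 1%E.

Definition mutually_independent d (T : measurableType d) (R : realType)
  (P : probability T R) (I : finType) (X : I -> {RV P >-> R}) : Prop :=
  forall (J : {set I}) (B : I -> set R),
    (forall i, measurable (B i)) ->
    P (\big[setI/setT]_(i in J) (X i @^-1` B i)) =
    (\prod_(i in J) P (X i @^-1` B i))%E.

From HB Require Import structures.
From mathcomp Require Import all_boot all_order all_algebra.
From mathcomp Require Import all_classical all_reals all_analysis.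
From mathcomp Require Import measurable_realfun ring lra.
Set Implicit Arguments. Unset Strict Implicit. Unset Printing Implicit Defensive.
Import Order.TTheory GRing.Theory Num.Theory.
Local Open Scope classical_set_scope.
Local Open Scope ring_scope.

(* Fix m and s, and write p_n = E[X_{m,n}] and c_n = C_{m,n}(s).  Almost surely
   X_{m,n} is the indicator of the event {X_{m,n} = 1}, and these events are pairwise
   independent, so Y = sum_n c_n (X_{m,n} - p_n) has
   E[Y^2] = sum_n c_n^2 p_n (1 - p_n) <= sum_n c_n^2 p_n.
   Rather than Jensen followed by Cauchy-Schwarz, use |y| <= lam y^2 / 2 + 1 / (2 lam)
   with one lam > 0 for all (m, s).  Since |C_{m,n}|_2 <= |C_{m,n}|_1 <= C and
   sum_m p_{m,n} = 1, summing gives a lam + b / lam with a = C^2 N / 2 and b = M S / 2,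
   and optimising over lam yields 2 sqrt (a b) = C sqrt (M N S). *)

Lemma normr_le_sqr_add_inv (R : realFieldType) (lam y : R) : 0 < lam ->
  `|y| <= lam / 2 * y ^+ 2 + (2 * lam)^-1.
Proof.
move=> lam_gt0.
have lamV_gt0 : 0 < lam^-1 by rewrite invr_gt0.
have lamK : lam * lam^-1 = 1 by rewrite mulfV ?gt_eqF.
rewrite invfM -real_normK ?num_real //.
have := mulr_ge0 (ltW lamV_gt0) (sqr_ge0 (lam * `|y| - 1)).
have := normr_ge0 y; nra.
Qed.

Lemma sum_sqr_le_sqr_sum_norm (R : realDomainType) (I : finType) (x : I -> R) :
  \sum_i x i ^+ 2 <= (\sum_i `|x i|) ^+ 2.
Proof.
rewrite expr2 mulr_suml; apply: ler_sum => i _.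
rewrite -real_normK ?num_real // expr2 ler_wpM2l //.
by rewrite (bigD1 i) //= lerDl sumr_ge0.
Qed.

Lemma sum_sqr_weighted_le (R : realDomainType) (I J K : finType)
    (c : I -> J -> K -> R) (p : I -> J -> R) (C : R) :
  (forall i j, 0 <= p i j) -> (forall j, \sum_i p i j = 1) ->
  (forall i j, \sum_k `|c i j k| <= C) ->
  \sum_k \sum_i \sum_j c i j k ^+ 2 * p i j <= C ^+ 2 * #|J|%:R.
Proof.
move=> p_ge0 p_sum c_l1.
have c_sqr i j : \sum_k c i j k ^+ 2 <= C ^+ 2.
  apply: le_trans (sum_sqr_le_sqr_sum_norm _) _.
  by apply: lerXn2r; rewrite ?nnegrE ?sumr_ge0 ?(le_trans _ (c_l1 i j)) ?sumr_ge0.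
rewrite exchange_big /=; under eq_bigr do rewrite exchange_big /=.
apply: (@le_trans _ _ (\sum_i \sum_j C ^+ 2 * p i j)).
  apply: ler_sum => i _; apply: ler_sum => j _; rewrite -mulr_suml.
  by apply: ler_wpM2r => //; apply: c_sqr.
rewrite exchange_big /=; under eq_bigr do rewrite -mulr_sumr p_sum mulr1.
by rewrite sumr_const mulr_natr.
Qed.

Lemma le_two_sqrt_of_forall_pos (R : rcfType) (a b x : R) : 0 <= a -> 0 < b ->
  (forall lam, 0 < lam -> x <= a * lam + b / lam) -> x <= 2 * Num.sqrt (a * b).
Proof.
move=> a_ge0 b_gt0 le_x; have [a0|a_neq0] := eqVneq a 0.
  rewrite a0 mul0r sqrtr0 mulr0; apply/negP => /negP; rewrite -ltNge => x_gt0.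
  have := le_x ((b + 1) / x) (divr_gt0 (ltr_wpDl (ltW b_gt0) ltr01) x_gt0).
  rewrite a0 mul0r add0r invf_div mulrA ler_pdivlMr ?ltr_wpDl ?(ltW b_gt0) //.
  nra.
have sa_gt0 : 0 < Num.sqrt a by rewrite sqrtr_gt0 lt0r a_neq0.
have sb_gt0 : 0 < Num.sqrt b by rewrite sqrtr_gt0.
suff <- : a * (Num.sqrt b / Num.sqrt a) + b / (Num.sqrt b / Num.sqrt a) =
    2 * Num.sqrt (a * b) by exact/le_x/divr_gt0.
move: (sqr_sqrtr a_ge0) (sqr_sqrtr (ltW b_gt0)) sa_gt0 sb_gt0.
rewrite sqrtrM //; set sa := Num.sqrt a; set sb := Num.sqrt b.
by move=> <- <- sa_gt0 sb_gt0; field; rewrite !gt_eqF.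
Qed.

Lemma lee_two_sqrt_of_forall_pos (R : realType) (a b : R) (x : \bar R) :
  0 <= a -> 0 < b ->
  (forall lam, 0 < lam -> (x <= (a * lam + b / lam)%:E)%E) ->
  (x <= (2 * Num.sqrt (a * b))%:E)%E.
Proof.
move=> a_ge0 b_gt0; case: x => [x le_x| /(_ 1 ltr01) //|_]; last exact: leNye.
by rewrite lee_fin; apply: le_two_sqrt_of_forall_pos => // lam /le_x.
Qed.

Lemma Lfun_indic d (T : measurableType d) (R : realType)
    (mu : {finite_measure set T -> \bar R}) (A : set T) (r : R) :
  measurable A -> 0 < r -> (\1_A : T -> R) \in Lfun mu r%:E.
Proof.
move=> mA r_gt0; rewrite inE/=; apply/andP; split; rewrite inE//=.
rewrite /finite_norm unlock poweR_lty//.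
rewrite (eq_integral (fun x => (\1_A x)%:E)) => [|x _].
  by rewrite integral_indic ?setIT// ltey_eq fin_num_measure.
by rewrite /= indicE; case: (x \in A); rewrite /= ?normr1 ?powR1 ?normr0 ?powR0 ?gt_eqF.
Qed.

Section expectation_of_sums.
Context d (T : measurableType d) (R : realType) (P : probability T R).

Lemma expectation_big (I : Type) (r : seq I) (F : I -> T -> R) :
  (forall i, F i \in Lfun P 1) ->
  ('E_P[\sum_(i <- r) F i] = \sum_(i <- r) 'E_P[F i])%E.
Proof.
move=> F1; elim: r => [|i r IHr]; first by rewrite !big_nil expectation_cst.
by rewrite !big_cons expectationD ?IHr ?F1 ?rpred_sum.
Qed.

Lemma ae_eq_expectation (f g : T -> R) :
  measurable_fun setT f -> measurable_fun setT g ->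
  {ae P, forall t, f t = g t} -> ('E_P[f] = 'E_P[g])%E.
Proof.
move=> mf mg fg; rewrite !unlock; apply: ae_eq_integral => //.
- exact/measurable_EFinP.
- exact/measurable_EFinP.
- by apply: filterS fg => t /= ->.
Qed.

Lemma covariance_indic (A B : set T) : measurable A -> measurable B ->
  covariance P \1_A \1_B = (P (A `&` B) - P A * P B)%E.
Proof.
move=> mA mB; have mAB := measurableI _ _ mA mB.
have indicM : \1_A * \1_B = \1_(A `&` B) :> (T -> R) by rewrite indicI.
by rewrite covarianceE ?indicM ?Lfun_indic // !expectation_indic.
Qed.

Lemma expectation_abs_le_sqr (Z : T -> R) (lam : R) : 0 < lam ->
  Z \in Lfun P 2%:E ->
  ('E_P[(fun t => `|Z t|)%R] <=
   (lam / 2)%:E * 'E_P[(fun t => Z t ^+ 2)%R] + ((2 * lam)^-1)%:E)%E.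
Proof.
move=> lam_gt0 Z2; have lam_ge0 := ltW lam_gt0.
have mZ : measurable_fun setT Z by have := sub_Lfun_mfun Z2; rewrite inE.
pose g := (lam / 2) \o* (fun t => Z t ^+ 2) \+ cst ((2 * lam)^-1).
have <- : ('E_P[g] =
    (lam / 2)%:E * 'E_P[(fun t => Z t ^+ 2)%R] + ((2 * lam)^-1)%:E)%E.
  by rewrite expectationD ?expectationZl ?expectation_cst ?Lfun_scale ?Lfun_cst
    ?Lfun2_mul_Lfun1.
apply: expectation_le => [||t|t|].
- exact: measurableT_comp.
- by apply: measurable_funD => //; apply: measurable_funM => //; exact: measurable_funX.
- exact: normr_ge0.
- apply: addr_ge0; first by rewrite mulr_ge0 ?sqr_ge0 ?divr_ge0.
  by rewrite invr_ge0 mulr_ge0.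
- by apply: nearW => t; rewrite /g /= mulrC normr_le_sqr_add_inv.
Qed.

Lemma expectation_sqr_centered_sum (I : finType) (Y : I -> T -> R) (c : I -> R) :
  (forall i, Y i \in Lfun P 2%:E) ->
  ('E_P[(fun t => (\sum_i c i * (Y i t - fine 'E_P[Y i])) ^+ 2)%R] =
   \sum_i \sum_j (c i * c j)%:E * covariance P (Y i) (Y j))%E.
Proof.
move=> Y2; pose D i := Y i \- cst (fine 'E_P[Y i]).
have D2 i : D i \in Lfun P 2%:E.
  by rewrite /D rpredB ?lee1n //= => _; rewrite Lfun_cst.
have DD1 i j : D i * D j \in Lfun P 1 by exact: Lfun2_mul_Lfun1.
have -> : (fun t => (\sum_i c i * (Y i t - fine 'E_P[Y i])) ^+ 2) =
    \sum_i \sum_j (c i * c j) \o* (D i * D j).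
  apply/funext => t; rewrite expr2 big_distrlr !fct_sumE; apply: eq_bigr => i _.
  by rewrite fct_sumE; apply: eq_bigr => j _; rewrite /= mulrACA mulrC.
rewrite expectation_big => [|i]; last by rewrite rpred_sum // => j _; exact: Lfun_scale.
apply: eq_bigr => i _; rewrite expectation_big => [|j]; last exact: Lfun_scale.
by apply: eq_bigr => j _; rewrite expectationZl // covariance.unlock.
Qed.

Lemma expectation_sqr_centered_indic_sum (I : finType) (A : I -> set T)
    (c : I -> R) :
  (forall i, measurable (A i)) ->
  (forall i j, i != j -> P (A i `&` A j) = (P (A i) * P (A j))%E) ->
  ('E_P[(fun t => (\sum_i c i * (\1_(A i) t - fine (P (A i)))) ^+ 2)%R] =
   (\sum_i c i ^+ 2 * (fine (P (A i)) * (1 - fine (P (A i)))))%:E)%E.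
Proof.
move=> mA indA; pose p i := fine (P (A i)).
have PA i : P (A i) = (p i)%:E by rewrite fineK ?fin_num_measure.
have <- : ('E_P[(fun t => (\sum_i c i * (\1_(A i) t - fine 'E_P[\1_(A i)])) ^+ 2)%R] =
    'E_P[(fun t => (\sum_i c i * (\1_(A i) t - p i)) ^+ 2)%R])%E.
  congr expectation; apply/funext => t.
  by under eq_bigr => i _ do rewrite expectation_indic //.
rewrite expectation_sqr_centered_sum => [|i]; last exact: Lfun_indic.
rewrite -sumEFin; apply: eq_bigr => i _.
rewrite (bigD1 i) //= big1 => [|j ji]; last first.
  by rewrite covariance_indic // indA 1?eq_sym // !PA -EFinM subrr mulr0.
rewrite addr0 covariance_indic // setIid -/(p i) PA -!EFinM; congr EFin; ring.
Qed.

Lemma bernoulli_rv_indicE (X : {RV P >-> R}) : bernoulli_rv X ->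
  {ae P, forall t, X t = \1_(X @^-1` [set 1]) t}.
Proof.
move=> XB; pose G := X @^-1` ([set 0] `|` [set 1]).
have mG : measurable G by apply: measurable_funPTI; exact: measurableU.
exists (~` G); split; first exact: measurableC.
  by rewrite probability_setC // XB subee.
move=> t /= XtE Gt; apply: XtE; rewrite indicE.
case: Gt => /= Xt; last by rewrite mem_set //= Xt.
by rewrite memNset /= Xt // => /eqP; rewrite eq_sym oner_eq0.
Qed.

Lemma expectation_bernoulli_rv (X : {RV P >-> R}) : bernoulli_rv X ->
  ('E_P[X] = P (X @^-1` [set 1%R]))%E.
Proof.
move=> XB; have mA : measurable (X @^-1` [set 1%R]) by exact: measurable_funPTI.
rewrite -expectation_indic //; apply: ae_eq_expectation => //.
exact: bernoulli_rv_indicE.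
Qed.

Lemma mutually_independent_pair (I : finType) (X : I -> {RV P >-> R})
    (i j : I) (Bi Bj : set R) :
  mutually_independent X -> i != j -> measurable Bi -> measurable Bj ->
  P (X i @^-1` Bi `&` X j @^-1` Bj) = (P (X i @^-1` Bi) * P (X j @^-1` Bj))%E.
Proof.
move=> indX ij mBi mBj; pose B k := if k == i then Bi else Bj.
have mB k : measurable (B k) by rewrite /B; case: ifP.
have := indX [set i; j]%SET B mB.
rewrite big_setU1 ?big_set1 ?inE //= big_setU1 ?big_set1 ?inE //=.
by rewrite /B eqxx eq_sym (negbTE ij).
Qed.

Lemma expectation_abs_centered_bernoulli_sum_le (I : finType)
    (X : I -> {RV P >-> R}) (c : I -> R) (lam : R) :
  0 < lam -> (forall i, bernoulli_rv (X i)) -> mutually_independent X ->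
  ('E_P[(fun t => `|\sum_i c i * (X i t - fine 'E_P[X i])|)%R] <=
   (lam / 2 * \sum_i c i ^+ 2 * fine 'E_P[X i] + (2 * lam)^-1)%:E)%E.
Proof.
move=> lam_gt0 XB indX; pose A i := X i @^-1` [set 1%R].
have mA i : measurable (A i) by exact: measurable_funPTI.
pose p i := fine (P (A i)).
have EX i : fine 'E_P[X i] = p i by rewrite expectation_bernoulli_rv.
pose Z t := \sum_i c i * (\1_(A i) t - p i).
have Z2 : Z \in Lfun P 2%:E.
  rewrite (_ : Z = \sum_i c i \o* (\1_(A i) \- cst (p i))); last first.
    by apply/funext => t; rewrite fct_sumE; apply: eq_bigr => i _; rewrite mulrC.
  rewrite rpred_sum ?lee1n // => ? i _.
  by rewrite Lfun_scale ?ler1n // rpredB ?lee1n ?Lfun_indic ?Lfun_cst.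
have -> : ('E_P[(fun t => `|\sum_i c i * (X i t - fine 'E_P[X i])|)%R] =
    'E_P[(fun t => `|Z t|)%R])%E.
  apply: ae_eq_expectation.
  - apply: measurableT_comp => //; apply: measurable_sum => i.
    by apply: measurable_funM => //; apply: measurable_funB.
  - by apply: measurableT_comp => //; have := sub_Lfun_mfun Z2; rewrite inE.
  - have : \forall t \ae P, forall i, X i t = \1_(A i) t.
      by apply: filter_forall => i; exact: bernoulli_rv_indicE.
    apply: filterS => t Xt.
    by congr `|_|; apply: eq_bigr => i _; rewrite Xt EX.
apply: le_trans (expectation_abs_le_sqr lam_gt0 Z2) _.
rewrite expectation_sqr_centered_indic_sum // => [|i j ij]; last first.
  exact: mutually_independent_pair.
rewrite -EFinM -EFinD lee_fin lerD2r ler_wpM2l ?divr_ge0 ?(ltW lam_gt0) //.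
apply: ler_sum => i _; rewrite EX -/(p i) ler_wpM2l ?sqr_ge0 //.
by rewrite mulrBr mulr1 gerBl mulr_ge0 ?fine_ge0.
Qed.

End expectation_of_sums.

Theorem lemma5 (d : measure_display) (T : measurableType d) (R : realType)
  (P : probability T R) (M N S : nat) (hM : (0 < M)%N) (hN : (0 < N)%N)
  (hS : (0 < S)%N)
  (X : 'I_M -> 'I_N -> {RV P >-> R})
  (Cv : 'I_M -> 'I_N -> 'I_S -> R) (C : R) :
  (forall m n, bernoulli_rv (X m n)) ->
  (forall m, mutually_independent (X m)) ->
  (forall n, (\sum_(m < M) 'E_P[X m n])%E = 1%E) ->
  (forall m n, \sum_(s < S) `|Cv m n s| <= C) ->
  (\sum_(s < S) \sum_(m < M)
      'E_P[(fun t => `| \sum_(n < N) Cv m n s * (X m n t - fine 'E_P[X m n]) |)%R]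
   <= (C * Num.sqrt ((M * N * S)%:R))%:E)%E.
Proof.
move=> XB indX EX_sum Cv_l1; pose p m n := fine 'E_P[X m n].
have EX m n : ('E_P[X m n] = (p m n)%:E)%E.
  by rewrite fineK // expectation_bernoulli_rv // fin_num_measure.
have p_ge0 m n : 0 <= p m n by rewrite /p expectation_bernoulli_rv // fine_ge0.
have p_sum n : \sum_m p m n = 1.
  by have := EX_sum n; under eq_bigr do rewrite EX; rewrite sumEFin => -[].
have C_ge0 : 0 <= C.
  by apply: le_trans (Cv_l1 (Ordinal hM) (Ordinal hN)); exact: sumr_ge0.
have -> : C * Num.sqrt (M * N * S)%:R =
    2 * Num.sqrt (C ^+ 2 * N%:R / 2 * ((M * S)%:R / 2)).
  rewrite (_ : _ / 2 * _ = (C / 2) ^+ 2 * (M * N * S)%:R); last first.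
    by rewrite !natrM; field.
  by rewrite sqrtrM ?sqr_ge0 // sqrtr_sqr ger0_norm ?divr_ge0 //; field.
apply: lee_two_sqrt_of_forall_pos => [||lam lam_gt0].
- by rewrite divr_ge0 // mulr_ge0 ?sqr_ge0.
- by rewrite divr_gt0 // ltr0n muln_gt0 hM.
apply: (@le_trans _ _ (\sum_(s < S) \sum_(m < M)
    (lam / 2 * \sum_(n < N) Cv m n s ^+ 2 * p m n + (2 * lam)^-1)%:E)%E).
  apply: lee_sum => s _; apply: lee_sum => m _.
  exact: expectation_abs_centered_bernoulli_sum_le.
rewrite (eq_bigr _ (fun s _ => sumEFin _ _ _)) sumEFin lee_fin.
under eq_bigr do rewrite big_split /= -mulr_sumr sumr_const card_ord.
rewrite big_split /= -mulr_sumr sumr_const card_ord -mulrnA -[_ *+ (M * S)]mulr_natr.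
have := sum_sqr_weighted_le p_ge0 p_sum Cv_l1; rewrite card_ord => Cv_p.
rewrite [leRHS](_ : _ = lam / 2 * (C ^+ 2 * N%:R) + (2 * lam)^-1 * (M * S)%:R).
  by rewrite lerD2r ler_wpM2l ?divr_ge0 ?(ltW lam_gt0).
by field; rewrite gt_eqF.
Qed.
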